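(* Let $A\in\mathcal{M}_n$ and $i,j\in\{1,\dots,n\}$. If $\alpha^A_i\equiv\alpha^A_j\equiv 0\pmod 2$ (so that $y^A_i,y^A_j$ lie in $H^2(M(A);\mathbb{Z})$) and $y^A_i\equiv y^A_j\pmod 2$ in $H^2(M(A);\mathbb{Z})$, then $i=j$.
   Context: Let $\mathcal{M}_n$ be the set of integral strictly upper triangular $n\times n$ matrices $A=(A^i_j)$ ($A^i_j$ is the $(i,j)$ entry, and $A^i_j=0$ for $i\ge j$). For $A\in\mathcal{M}_n$, $M(A)$ denotes the Bott manifold obtained as the quotient of $(S^3)^n$ ($S^3\subset\mathbb{C}^2$ the unit sphere) by the free $(S^1)^n$-action $(g_1,\dots,g_n)\cdot((z_1,w_1),\dots,(z_n,w_n))=\big(((\prod_{k<j}g_k^{-A^k_j})g_jz_j,\ g_jw_j)\big)_{j=1}^n$. Let $x^A_j\in H^2(M(A);\mathbb{Z})$ be the first Chern class of the line bundle obtained as the quotient of $(S^3)^n\times\mathbb{C}$ where $g$ acts on the $\mathbb{C}$-factor by $g_j^{-1}$. Put $\alpha^A_j=\sum_{i<j}A^i_jx^A_i$. Then $H^*(M(A);\mathbb{Z})=\mathbb{Z}[x^A_1,\dots,x^A_n]/((x^A_j)^2-\alpha^A_jx^A_j\mid j=1,\dots,n)$, and $x^A_1,\dots,x^A_n$ form a basis of $H^2(M(A);\mathbb{Z})$. Define $y^A_j=x^A_j-\tfrac12\alpha^A_j\in H^2(M(A);\mathbb{Q})$. *)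

From HB Require Import structures.
From mathcomp Require Import all_boot all_order all_algebra.
Set Implicit Arguments. Unset Strict Implicit. Unset Printing Implicit Defensive.
Import Order.TTheory GRing.Theory Num.Theory.
Local Open Scope ring_scope.

(* Indices {1,...,n} are modelled by 'I_n (i.e. {0,...,n-1}).
   A in M_n: integral strictly upper triangular n x n matrix, A i j = A^i_j. *)
Definition strictly_upper (n : nat) (A : 'M[int]_n) : Prop :=
  forall i j : 'I_n, (j <= i)%N -> A i j = 0.

(* H^2(M(A);Z) is the free Z-module with basis x^A_1..x^A_n; we identify it
   with 'rV[int]_n, x^A_j being the j-th standard basis vector.
   H^2(M(A);Q) = H^2(M(A);Z) (x) Q is identified with 'rV[rat]_n. *)
Definition xA (n : nat) (j : 'I_n) : 'rV[int]_n := delta_mx 0 j.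

Definition alphaA (n : nat) (A : 'M[int]_n) (j : 'I_n) : 'rV[int]_n :=
  \sum_(i < n | (i < j)%N) A i j *: xA i.

Definition toQ (n : nat) (v : 'rV[int]_n) : 'rV[rat]_n := map_mx intr v.

Definition yA (n : nat) (A : 'M[int]_n) (j : 'I_n) : 'rV[rat]_n :=
  toQ (xA j) - (2%:R)^-1 *: toQ (alphaA A j).

From HB Require Import structures.
From mathcomp Require Import all_boot all_order all_algebra.
From mathcomp Require Import zify.
Set Implicit Arguments. Unset Strict Implicit. Unset Printing Implicit Defensive.
Import Order.TTheory GRing.Theory Num.Theory.
Local Open Scope ring_scope.

(* If i < j then at coordinate j the classes alpha_i and alpha_j vanish, so
   y_j - y_i has j-th coordinate 1; an integral class congruent to 0 mod 2
   has only even coordinates. *)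

Lemma alphaA_coord_ge (n : nat) (A : 'M[int]_n) (j k : 'I_n) :
  (j <= k)%N -> alphaA A j 0 k = 0.
Proof.
move=> le_jk; rewrite /alphaA summxE big1 // => l lt_lj.
have /negbTE neq_kl : k != l.
  by apply: contraTneq lt_lj => <-; rewrite -leqNgt.
by rewrite !mxE neq_kl mulr0.
Qed.

Lemma yA_coord_ge (n : nat) (A : 'M[int]_n) (j k : 'I_n) :
  (j <= k)%N -> yA A j 0 k = (j == k)%:R.
Proof.
move=> le_jk; rewrite /yA /toQ !mxE alphaA_coord_ge // mulr0 subr0 eqxx.
by rewrite eq_sym; case: (j == k); rewrite ?rmorph0 ?rmorph1.
Qed.

Lemma yA_subr_coord_max (n : nat) (A : 'M[int]_n) (i j : 'I_n) :
  (i < j)%N -> (yA A j - yA A i) 0 j = 1.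
Proof.
move=> lt_ij; rewrite mxE [X in _ + X]mxE !yA_coord_ge ?(ltnW lt_ij) // eqxx.
by rewrite -val_eqE (ltn_eqF lt_ij) subr0.
Qed.

Lemma toQ_double_coord_neq1 (n : nat) (z : 'rV[int]_n) (k : 'I_n) :
  toQ (2%:Z *: z) 0 k != 1.
Proof.
rewrite /toQ !mxE -[1 : rat]/(1%:~R) eqr_int.
by apply/eqP; lia.
Qed.

Lemma yA_subr_double_leq (n : nat) (A : 'M[int]_n) (i j : 'I_n)
    (z : 'rV[int]_n) :
  yA A j - yA A i = toQ (2%:Z *: z) -> (j <= i)%N.
Proof.
move=> eq_z; rewrite leqNgt; apply/negP => lt_ij.
by have := toQ_double_coord_neq1 z j; rewrite -eq_z yA_subr_coord_max ?eqxx.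
Qed.

Theorem lemma3p1 (n : nat) (A : 'M[int]_n) (hA : strictly_upper A)
    (i j : 'I_n)
    (hi : exists a : 'rV[int]_n, alphaA A i = 2%:Z *: a)
    (hj : exists b : 'rV[int]_n, alphaA A j = 2%:Z *: b)
    (hij : exists z : 'rV[int]_n, yA A i - yA A j = toQ (2%:Z *: z)) :
  i = j.
Proof.
case: hij => z eq_z.
have eq_nz : yA A j - yA A i = toQ (2%:Z *: - z).
  by rewrite -opprB eq_z /toQ scalerN !raddfN.
apply/val_inj/eqP.
by rewrite eqn_leq (yA_subr_double_leq eq_z) (yA_subr_double_leq eq_nz).
Qed.
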